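(* $\mathfrak{d}_{\mathrm{game}}^{\mathrm{I}} = \mathfrak{d}_{\mathrm{game}}^{\mathrm{II}} = \mathfrak{d}_{\mathrm{game}^*}^{\mathrm{I}} = \mathfrak{d}$ and $\mathfrak{d}_{\mathrm{game}^*}^{\mathrm{II}} = \mathfrak{c}$.
   Context: For $x,y\in\omega^\omega$, $x\le^* y$ means $x(n)\le y(n)$ for all but finitely many $n$. $\mathfrak{d}$ is the least size of a family $\mathcal{A}\subseteq\omega^\omega$ such that every $x\in\omega^\omega$ satisfies $x\le^* y$ for some $y\in\mathcal{A}$; $\mathfrak{c}=2^{\aleph_0}$. For $\mathcal{A}\subseteq\omega^\omega$, the dominating game with respect to $\mathcal{A}$: at round $k$, Player I plays $n_k\in\omega$ and then Player II plays $i_k\in\{0,1\}$; Player II wins iff $i_k=1$ for all but finitely many $k$ and there is $g\in\mathcal{A}$ with $\{k: i_k=1\}=\{k: n_k<g(k)\}$. The dominating* game with respect to $\mathcal{A}$: at round $k$, Player I plays $n_k\in\omega$ and then Player II plays $m_k\in\omega$; Player II wins iff $\langle m_k:k\in\omega\rangle\in\mathcal{A}$ and $n_k<m_k$ for all but finitely many $k$. $\mathfrak{d}_{\mathrm{game}}^{\mathrm{I}}$ (resp. $\mathfrak{d}_{\mathrm{game}^*}^{\mathrm{I}}$) is the least $|\mathcal{A}|$ such that Player I has no winning strategy in the dominating (resp. dominating* ) game with respect to $\mathcal{A}$; $\mathfrak{d}_{\mathrm{game}}^{\mathrm{II}}$ (resp. $\mathfrak{d}_{\mathrm{game}^*}^{\mathrm{II}}$)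 is the least $|\mathcal{A}|$ such that Player II has a winning strategy in the dominating (resp. dominating* ) game with respect to $\mathcal{A}$. *)

(* Sets of functions are predicates; cardinal characteristics
   are compared via injections. *)
From Stdlib Require Import List Arith.
Import ListNotations.

Definition baire := nat -> nat.

Definition prefix {X : Type} (f : nat -> X) (k : nat) : list X :=
  map f (seq 0 k).

Definition cofinitely (P : nat -> Prop) : Prop :=
  exists N, forall k, N <= k -> P k.

Definition le_star (x y : baire) : Prop := cofinitely (fun n => x n <= y n).

Definition dominating (A : baire -> Prop) : Prop :=
  forall x : baire, exists y, A y /\ le_star x y.

Definition le_card {X Y : Type} (B : X -> Prop) (A : Y -> Prop) : Prop :=
  exists f : X -> Y,
    (forall x, B x -> A (f x)) /\
    (forall x y, B x -> B y -> f x = f y -> x = y).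

(* min{|A| : P A} = min{|B| : Q B} *)
Definition same_min (P Q : (baire -> Prop) -> Prop) : Prop :=
  (forall A, P A -> exists B, Q B /\ le_card B A) /\
  (forall B, Q B -> exists A, P A /\ le_card A B).

(* min{|A| : P A} = |2^omega| = c *)
Definition min_is_continuum (P : (baire -> Prop) -> Prop) : Prop :=
  (forall A, P A -> le_card (fun _ : nat -> bool => True) A) /\
  (exists A, P A /\ le_card A (fun _ : nat -> bool => True)).

Definition dom_II_wins (A : baire -> Prop) (n : nat -> nat) (i : nat -> bool) : Prop :=
  cofinitely (fun k => i k = true) /\
  exists g, A g /\ (forall k, i k = true <-> n k < g k).

(* Strategy of I: n_k from II's previous moves i_0..i_{k-1}. *)
Definition dom_I_play (sigma : list bool -> nat) (i : nat -> bool) : nat -> nat :=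
  fun k => sigma (prefix i k).
Definition dom_I_winning (A : baire -> Prop) (sigma : list bool -> nat) : Prop :=
  forall i : nat -> bool, ~ dom_II_wins A (dom_I_play sigma i) i.

(* Strategy of II: i_k from I's moves n_0..n_k. *)
Definition dom_II_play (tau : list nat -> bool) (n : nat -> nat) : nat -> bool :=
  fun k => tau (prefix n (S k)).
Definition dom_II_winning (A : baire -> Prop) (tau : list nat -> bool) : Prop :=
  forall n : nat -> nat, dom_II_wins A n (dom_II_play tau n).

Definition domstar_II_wins (A : baire -> Prop) (n m : nat -> nat) : Prop :=
  A m /\ cofinitely (fun k => n k < m k).

Definition domstar_I_play (sigma : list nat -> nat) (m : nat -> nat) : nat -> nat :=
  fun k => sigma (prefix m k).
Definition domstar_I_winning (A : baire -> Prop) (sigma : list nat -> nat) : Prop :=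
  forall m : nat -> nat, ~ domstar_II_wins A (domstar_I_play sigma m) m.

Definition domstar_II_play (tau : list nat -> nat) (n : nat -> nat) : nat -> nat :=
  fun k => tau (prefix n (S k)).
Definition domstar_II_winning (A : baire -> Prop) (tau : list nat -> nat) : Prop :=
  forall n : nat -> nat, domstar_II_wins A n (domstar_II_play tau n).

Definition P_game_I (A : baire -> Prop) : Prop :=
  ~ exists sigma, dom_I_winning A sigma.
Definition P_game_II (A : baire -> Prop) : Prop :=
  exists tau, dom_II_winning A tau.
Definition P_gamestar_I (A : baire -> Prop) : Prop :=
  ~ exists sigma, domstar_I_winning A sigma.
Definition P_gamestar_II (A : baire -> Prop) : Prop :=
  exists tau, domstar_II_winning A tau.

(* Each winning condition of II forces the family to be dominating: Player I
   simply plays the values x(k) of a given x.  Hence every family in the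
   defining property of d_game^I, d_game^II, d_game*^I is dominating, which
   gives one inequality of each equality.

   Conversely, let B be dominating.
   - B itself defeats every strategy of I in the dominating game: dominate
     the maximum of I's moves over all 2^k histories of length k.
   - In the dominating* game II answers the history s by b(code s) for some
     b in B, where code enumerates finite sequences; the resulting family
     is an image of B.
   - In the dominating game, II wins by always playing 1 against the family
     of all shifts b + c (b in B, c in N).  This family is an image of
     N x B, which has the same size as B because B is infinite (an
     absorption argument via Zorn's lemma).
   Finally, II's winning strategy in the dominating* game has to split
   every finite position into two incompatible extensions; following the
   splittings along z in 2^N yields a perfect tree and an injection of 2^N
   into the family, while the family of all functions does admit a winning
   strategy.  So d_game*^II = c. *)

From Stdlib Require Import List Arith Lia Cantor Classical ClassicalEpsilon
  FunctionalExtensionality.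
From mathcomp Require ssreflect ssrbool classical_sets cardinality.
Import ListNotations.

Lemma prefix_length {X : Type} (f : nat -> X) (k : nat) : length (prefix f k) = k.
Proof. unfold prefix. rewrite length_map, length_seq. reflexivity. Qed.

Lemma prefix_S {X : Type} (f : nat -> X) (k : nat) :
  prefix f (S k) = prefix f k ++ [f k].
Proof. unfold prefix. rewrite seq_S, map_app. reflexivity. Qed.

Lemma prefix_firstn {X : Type} (f : nat -> X) (a b : nat) :
  a <= b -> firstn a (prefix f b) = prefix f a.
Proof.
  intros Hab. induction Hab as [|b Hab IH].
  - rewrite <- (prefix_length f a) at 1. apply firstn_all.
  - rewrite prefix_S, firstn_app, prefix_length, IH.
    replace (a - b) with 0 by lia. apply app_nil_r.
Qed.

Lemma prefix_of_list {X : Type} (f : nat -> X) (l : list X) (d : X) :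
  (forall i, i < length l -> f i = nth i l d) -> prefix f (length l) = l.
Proof.
  intros Hf. apply nth_ext with (d := d) (d' := d); rewrite prefix_length; [reflexivity|].
  intros i Hi. unfold prefix.
  rewrite nth_indep with (d' := f 0) by (rewrite length_map, length_seq; lia).
  rewrite map_nth, seq_nth by lia. auto.
Qed.

(* The sequence whose k-th term is computed by r from the previous terms:
   this is how a strategy answering histories produces a play. *)
Fixpoint selfrec_prefix {X : Type} (r : list X -> X) (k : nat) : list X :=
  match k with
  | 0 => []
  | S k => selfrec_prefix r k ++ [r (selfrec_prefix r k)]
  end.

Definition selfrec {X : Type} (r : list X -> X) (k : nat) : X :=
  r (selfrec_prefix r k).

Lemma selfrec_eq {X : Type} (r : list X -> X) (k : nat) :
  selfrec r k = r (prefix (selfrec r) k).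
Proof.
  assert (Hpre : forall n, prefix (selfrec r) n = selfrec_prefix r n).
  { induction n as [|n IH]; [reflexivity|]. rewrite prefix_S, IH. reflexivity. }
  rewrite Hpre. reflexivity.
Qed.

Lemma le_list_max (x : nat) (l : list nat) : In x l -> x <= list_max l.
Proof.
  intros Hx. assert (Hall := proj1 (list_max_le l (list_max l)) (le_n _)).
  rewrite Forall_forall in Hall. auto.
Qed.

Lemma le_card_refl {X : Type} (A : X -> Prop) : le_card A A.
Proof. exists (fun x => x). split; auto. Qed.

Lemma le_card_trans {X Y Z : Type} (A : X -> Prop) (B : Y -> Prop) (C : Z -> Prop) :
  le_card A B -> le_card B C -> le_card A C.
Proof.
  intros [f [fAB fI]] [g [gBC gI]]. exists (fun x => g (f x)). split; auto.
Qed.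

(* An image of B is at most as large as B: choose a preimage. *)
Lemma le_card_image {X Y : Type} (x0 : X) (f : X -> Y) (B : X -> Prop) :
  le_card (fun y => exists x, B x /\ y = f x) B.
Proof.
  exists (fun y => epsilon (inhabits x0) (fun x => B x /\ y = f x)). split.
  - intros y Hy. exact (proj1 (epsilon_spec _ _ Hy)).
  - intros y y' Hy Hy' E.
    rewrite (proj2 (epsilon_spec (inhabits x0) _ Hy)),
      (proj2 (epsilon_spec (inhabits x0) _ Hy')), E.
    reflexivity.
Qed.

(* Every family in the defining properties of d_game^I, d_game^II and
   d_game*^I is dominating: against x, Player I plays n_k = x(k), and a
   win of II is a function of the family dominating x. *)

Lemma game_I_dominating (A : baire -> Prop) : P_game_I A -> dominating A.
Proof.
  intros HA x. apply NNPP. intros Hx. apply HA.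
  exists (fun s => x (length s)). intros i [[N HN] [g [Ag Hg]]].
  apply Hx. exists g. split; [exact Ag|]. exists N. intros k Hk.
  specialize (HN k Hk). apply Hg in HN.
  unfold dom_I_play in HN. rewrite prefix_length in HN. lia.
Qed.

Lemma game_II_dominating (A : baire -> Prop) : P_game_II A -> dominating A.
Proof.
  intros [tau Htau] x. destruct (Htau x) as [[N HN] [g [Ag Hg]]].
  exists g. split; [exact Ag|]. exists N. intros k Hk.
  specialize (HN k Hk). apply Hg in HN. lia.
Qed.

Lemma gamestar_I_dominating (A : baire -> Prop) : P_gamestar_I A -> dominating A.
Proof.
  intros HA x. apply NNPP. intros Hx. apply HA.
  exists (fun s => x (length s)). intros m [Am [N HN]].
  apply Hx. exists m. split; [exact Am|]. exists N. intros k Hk.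
  specialize (HN k Hk). unfold domstar_I_play in HN. rewrite prefix_length in HN. lia.
Qed.

Fixpoint bool_lists (k : nat) : list (list bool) :=
  match k with
  | 0 => [[]]
  | S k => map (cons false) (bool_lists k) ++ map (cons true) (bool_lists k)
  end.

Lemma bool_lists_complete (s : list bool) : In s (bool_lists (length s)).
Proof.
  induction s as [|b s IH]; simpl; [auto|].
  apply in_or_app. destruct b; [right|left]; apply in_map; exact IH.
Qed.

(* A dominating family defeats every strategy sigma of I in the dominating
   game: take g in B eventually above the maximum of sigma over histories
   of length k, and let II answer truthfully whether n_k < g(k). *)
Lemma dominating_game_I (B : baire -> Prop) : dominating B -> P_game_I B.
Proof.
  intros HB [sigma Hsigma].
  destruct (HB (fun k => S (list_max (map sigma (bool_lists k))))) as [g [Bg [N HN]]].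
  set (i := selfrec (fun s : list bool => sigma s <? g (length s))).
  assert (Hi : forall k, i k = true <-> dom_I_play sigma i k < g k).
  { intros k. unfold i at 1. rewrite selfrec_eq, prefix_length. apply Nat.ltb_lt. }
  apply (Hsigma i). split.
  - exists N. intros k Hk. apply Hi. specialize (HN k Hk). unfold dom_I_play.
    assert (sigma (prefix i k) <= list_max (map sigma (bool_lists k))); [|lia].
    apply le_list_max, in_map. rewrite <- (prefix_length i k) at 2.
    apply bool_lists_complete.
  - exists g. split; [exact Bg|exact Hi].
Qed.

Fixpoint code (s : list nat) : nat :=
  match s with
  | [] => 0
  | a :: s => S (to_nat (a, code s))
  end.

Lemma code_inj (s t : list nat) : code s = code t -> s = t.
Proof.
  revert t; induction s as [|a s IH]; intros [|b t]; cbn -[to_nat]; intros E;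
    try discriminate; [reflexivity|].
  assert (E' : to_nat (a, code s) = to_nat (b, code t)) by congruence.
  apply (f_equal of_nat) in E'. rewrite !cancel_of_to in E'.
  injection E' as -> E'. f_equal. auto.
Qed.

Lemma length_le_code (s : list nat) : length s <= code s.
Proof.
  induction s as [|a s IH]; cbn -[to_nat]; [lia|].
  pose proof (to_nat_non_decreasing a (code s)). lia.
Qed.

Definition decode (j : nat) : list nat := epsilon (inhabits []) (fun s => code s = j).

Lemma decode_code (s : list nat) : decode (code s) = s.
Proof.
  apply code_inj. apply (epsilon_spec (inhabits []) (fun t => code t = code s)).
  exists s. reflexivity.
Qed.

Definition coded_answers (b : baire) : baire := selfrec (fun s => b (code s)).

(* The coded answers of a dominating family defeat every strategy of I:
   if b dominates j |-> sigma(decode j) + 1, then from some round on II's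
   answer b(code s) beats I's move sigma(s), since code s >= length s. *)
Lemma dominating_gamestar_I (B : baire -> Prop) :
  dominating B -> P_gamestar_I (fun a => exists b, B b /\ a = coded_answers b).
Proof.
  intros HB [sigma Hsigma].
  destruct (HB (fun j => S (sigma (decode j)))) as [y [By [N HN]]].
  apply (Hsigma (coded_answers y)). split; [exists y; auto|].
  exists N. intros k Hk. unfold domstar_I_play.
  unfold coded_answers at 2. rewrite selfrec_eq. fold (coded_answers y).
  set (s := prefix (coded_answers y) k).
  assert (Hs : N <= code s).
  { pose proof (length_le_code s). unfold s in *. rewrite prefix_length in *. lia. }
  specialize (HN _ Hs). rewrite decode_code in HN. lia.
Qed.

Section NatTimesInfinite.
Import ssreflect ssrbool classical_sets cardinality.
Local Open Scope classical_set_scope.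

Definition injective_seq {T : Type} (F : T -> Prop) (w : nat -> T) : Prop :=
  (forall k, F (w k)) /\ (forall j k, w j = w k -> j = k).

(* A set without an injective sequence is finite, hence countable. *)
Lemma no_injective_seq_countable (T : Type) (F : T -> Prop) :
  (forall w, ~ injective_seq F w) ->
  exists idx : T -> nat, forall x y, F x -> F y -> idx x = idx y -> x = y.
Proof.
move=> noseq.
have finF : finite_set F.
  apply: NNPP => /infiniteP; elim/Ppointed: T F noseq => T' F noseq.
    by rewrite emptyE (negbTE setT0).
  move/pcard_leP/injfunPex => [w Fw wI].
  apply: (noseq w); split=> [k|j k]; first exact: Fw.
  by move=> E; apply: wI; rewrite ?in_setE.
move/finite_set_countable/pcard_injP: finF => [idx idxI].
by exists idx => x y Fx Fy; apply: idxI; rewrite in_setE.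
Qed.

Variables (T : Type) (B : T -> Prop).

(* A partial absorption of N x B into B is the graph G of an injective map
   (c, x) |-> y from N x S into S, where S (the support) is a subset of B. *)
Definition support (G : set (nat * T * T)) (x : T) : Prop :=
  exists c y, G (c, x, y).

Definition absorbing (G : set (nat * T * T)) : Prop :=
  [/\ forall x, support G x -> B x,
      forall c x, support G x -> exists y, G (c, x, y),
      forall c x y, G (c, x, y) -> support G y,
      forall c x y y', G (c, x, y) -> G (c, x, y') -> y = y' &
      forall c c' x x' y, G (c, x, y) -> G (c', x', y) -> c = c' /\ x = x'].

(* The union of a chain of partial absorptions is one, so Zorn's lemma
   gives a maximal partial absorption. *)
Lemma absorbing_bigcup (F : set (set (nat * T * T))) :
  F `<=` absorbing -> total_on F subset -> absorbing (\bigcup_(G in F) G).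
Proof.
move=> Fabs Ftot.
have supp G x : F G -> support G x -> support (\bigcup_(G in F) G) x.
  by move=> FG [c [y Gy]]; exists c, y, G.
have common G G' p p' : F G -> F G' -> G p -> G' p' ->
    exists2 H, F H /\ absorbing H & H p /\ H p'.
  move=> FG FG' Gp Gp'; have [GG'|G'G] := Ftot G G' FG FG'.
    by exists G'; [split; [|apply: Fabs]|split=> //; apply: GG'].
  by exists G; [split; [|apply: Fabs]|split=> //; apply: G'G].
split.
- by move=> x [c [y [G FG Gy]]]; case: (Fabs G FG) => + _ _ _ _; apply; exists c, y.
- move=> c x [c0 [y0 [G FG Gy]]]; case: (Fabs G FG) => _ + _ _ _.
  by move=> /(_ c x) [|y Gy']; [exists c0, y0|exists y, G].
- move=> c x y [G FG Gy]; apply: (supp G) => //.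
  by case: (Fabs G FG) => _ _ + _ _; apply; exact: Gy.
- move=> c x y y' [G FG Gy] [G' FG' Gy'].
  have [H [_ [_ _ _ Hfun _]] [Hy Hy']] := common G G' _ _ FG FG' Gy Gy'.
  exact: Hfun Hy Hy'.
- move=> c c' x x' y [G FG Gy] [G' FG' Gy'].
  have [H [_ [_ _ _ _ Hinj]] [Hy Hy']] := common G G' _ _ FG FG' Gy Gy'.
  exact: Hinj Hy Hy'.
Qed.

(* A partial absorption can be enlarged along an injective sequence w
   outside its support: send (c, w i) to w <c, i>. *)
Definition seq_graph (w : nat -> T) : set (nat * T * T) :=
  fun t => let '(c, x, y) := t in exists i, x = w i /\ y = w (to_nat (c, i)).

Lemma absorbing_extend G w :
  absorbing G -> injective_seq (fun x => B x /\ ~ support G x) w ->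
  absorbing (G `|` seq_graph w) /\ G `<` G `|` seq_graph w.
Proof.
move=> [GB Gtot Gval Gfun Ginj] [wB winj].
have wnew i : ~ support G (w i) by case: (wB i).
have wsupp i : support (G `|` seq_graph w) (w i).
  by exists 0, (w (to_nat (0, i))); right; exists i.
have to_nat_inj c c' i i' : w (to_nat (c, i)) = w (to_nat (c', i')) -> c = c' /\ i = i'.
  move=> /winj /(f_equal of_nat); rewrite !cancel_of_to; by case.
split; last first.
  split=> [t|]; first by left.
  move=> /(_ (0, w 0, w (to_nat (0, 0)))) sub.
  by apply: (wnew 0); exists 0, (w (to_nat (0, 0))); apply: sub; right; exists 0.
split.
- move=> x [c [y [Gy|[i [-> _]]]]]; last by case: (wB i).
  by apply: GB; exists c, y.
- move=> c x [c0 [y0 [Gy|[i [-> _]]]]].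
    by have [y Gy'] := Gtot c x (ex_intro _ c0 (ex_intro _ y0 Gy)); exists y; left.
  by exists (w (to_nat (c, i))); right; exists i.
- move=> c x y [Gy|[i [_ ->]]]; last exact: wsupp.
  by have [c' [y' Gy']] := Gval c x y Gy; exists c', y'; left.
- move=> c x y y' [Gy|[i [-> ->]]] [Gy'|[i' [E ->]]].
  + exact: Gfun Gy Gy'.
  + by case: (wnew i'); rewrite -E; exists c, y.
  + by case: (wnew i); exists c, y'.
  + by rewrite (winj _ _ E).
- move=> c c' x x' y [Gy|[i [-> ->]]] [Gy'|[i' [-> E]]].
  + exact: Ginj Gy Gy'.
  + by case: (wnew (to_nat (c', i'))); rewrite -E; exact: Gval Gy.
  + by case: (wnew (to_nat (c, i))); exact: Gval Gy'.
  + by have [-> ->] := to_nat_inj _ _ _ _ E.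
Qed.

(* Outside the support S of a maximal
   partial absorption G there is no injective sequence, so B \ S embeds in N
   via some idx; map (c, b) to G(2c, b) for b in S and to G(2<c, idx b> + 1, s0)
   for b outside S, with a fixed s0 in S. *)
Lemma nat_times_absorbed (w0 : nat -> T) :
  injective_seq B w0 -> le_card (fun p : nat * T => B (snd p)) B.
Proof.
move=> w0seq.
have [G [Gabs Gmax]] := Zorn_bigcup absorbing_bigcup.
have noseq w : ~ injective_seq (fun x => B x /\ ~ support G x) w.
  by move=> wseq; have [Habs Hprop] := absorbing_extend G w Gabs wseq; exact: Gmax Hprop Habs.
have [idx idxI] := no_injective_seq_countable _ _ noseq.
have [s0 Gs0] : exists s0, support G s0.
  apply: NNPP => noG; apply: (noseq w0); case: w0seq => w0B w0I.
  by split=> // k; split=> // Gk; apply: noG; exists (w0 k).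
case: Gabs => GB Gtot Gval _ Ginj.
pose app c x := epsilon (inhabits s0) (fun y => G (c, x, y)).
have appG c x : support G x -> G (c, x, app c x).
  by move=> Gx; exact: (epsilon_spec (inhabits s0) _ (Gtot c x Gx)).
have appI c c' x x' : support G x -> support G x' -> app c x = app c' x' -> c = c' /\ x = x'.
  by move=> Gx Gx' E; apply: (Ginj _ _ _ _ (app c x) (appG c x Gx)); rewrite E; exact: appG.
exists (fun p => let '(c, b) := p in
  if excluded_middle_informative (support G b) then app (2 * c) b
  else app (S (2 * to_nat (c, idx b))) s0).
split.
- move=> [c b]; cbn -[to_nat] => Bb; case: excluded_middle_informative => Gb; apply: GB;
  exact: Gval (appG _ _ _).
- move=> [c b] [c' b']; cbn -[to_nat] => Bb Bb'.
  case: excluded_middle_informative => Gb; case: excluded_middle_informative => Gb' E.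
  + by case: (appI _ _ _ _ Gb Gb' E) => Ec ->; f_equal; lia.
  + by case: (appI _ _ _ _ Gb Gs0 E); lia.
  + by case: (appI _ _ _ _ Gs0 Gb' E); lia.
  + case: (appI _ _ _ _ Gs0 Gs0 E) => Ec _.
    have /(f_equal of_nat) : to_nat (c, idx b) = to_nat (c', idx b') by lia.
    rewrite !cancel_of_to => -[-> Ei].
    by rewrite (idxI _ _ (conj Bb Gb) (conj Bb' Gb') Ei).
Qed.

End NatTimesInfinite.

(* A dominating family is infinite: choose successively members of B
   dominating 1 + the previous choice; they are eventually strictly
   increasing, hence pairwise distinct. *)
Definition dominator (B : baire -> Prop) (x : baire) : baire :=
  epsilon (inhabits x) (fun y => B y /\ le_star x y).

Fixpoint climbing (B : baire -> Prop) (k : nat) : baire :=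
  match k with
  | 0 => dominator B (fun _ => 0)
  | S k => dominator B (fun n => S (climbing B k n))
  end.

Lemma le_star_trans (x y z : baire) : le_star x y -> le_star y z -> le_star x z.
Proof.
  intros [N1 H1] [N2 H2]. exists (N1 + N2). intros k Hk.
  specialize (H1 k ltac:(lia)). specialize (H2 k ltac:(lia)). lia.
Qed.

Lemma dominating_infinite (B : baire -> Prop) :
  dominating B -> injective_seq B (climbing B).
Proof.
  intros HB.
  assert (Hdom : forall x, B (dominator B x) /\ le_star x (dominator B x)).
  { intros x. exact (epsilon_spec (inhabits x) (fun y => B y /\ le_star x y) (HB x)). }
  assert (Hlt : forall j k, j < k -> le_star (fun n => S (climbing B j n)) (climbing B k)).
  { intros j k Hjk. induction Hjk as [|k Hjk IH]; [apply Hdom|].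
    apply le_star_trans with (1 := IH).
    apply le_star_trans with (y := fun n => S (climbing B k n)); [|apply Hdom].
    exists 0. intros n _. lia. }
  assert (Hne : forall j k, j < k -> climbing B j <> climbing B k).
  { intros j k Hjk E. destruct (Hlt j k Hjk) as [N HN].
    specialize (HN N (le_n N)). rewrite E in HN. lia. }
  split.
  - intros [|k]; apply Hdom.
  - intros j k E. destruct (lt_eq_lt_dec j k) as [[H|H]|H]; [|exact H|].
    + exfalso. exact (Hne j k H E).
    + exfalso. exact (Hne k j H (eq_sym E)).
Qed.

Definition shift (b : baire) (c : nat) : baire := fun k => b k + c.

(* II always plays 1 and wins against the shifts of a dominating family:
   if y dominates n + 1 from round N on, then y + c with c above
   n_0, ..., n_{N-1} is everywhere above I's moves.  This family of shifts
   is an image of N x B, hence not larger than B. *)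
Lemma dominating_game_II (B : baire -> Prop) :
  dominating B -> exists A, P_game_II A /\ le_card A B.
Proof.
  intros HB.
  set (A := fun a => exists p : nat * baire, B (snd p) /\ a = shift (snd p) (fst p)).
  exists A. split.
  - exists (fun _ => true). intros n. split; [exists 0; auto|].
    destruct (HB (fun k => S (n k))) as [y [By [N HN]]].
    set (c := S (list_max (map n (seq 0 N)))).
    exists (shift y c). split; [exists (c, y); auto|].
    intros k. unfold dom_II_play. split; [intros _|reflexivity].
    unfold shift. destruct (le_lt_dec N k) as [Hk|Hk].
    + specialize (HN k Hk). lia.
    + assert (n k <= list_max (map n (seq 0 N))); [|unfold c; lia].
      apply le_list_max, in_map, in_seq. lia.
  - apply le_card_trans with (B := fun p : nat * baire => B (snd p)).
    + apply (le_card_image (0, fun _ => 0)).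
    + apply (nat_times_absorbed _ _ (climbing B)), dominating_infinite, HB.
Qed.

Definition ext (h t : list nat) : Prop := exists r, t = h ++ r.

Lemma ext_refl (h : list nat) : ext h h.
Proof. exists []. symmetry. apply app_nil_r. Qed.

Lemma ext_trans (a b c : list nat) : ext a b -> ext b c -> ext a c.
Proof. intros [r ->] [r' ->]. exists (r ++ r'). symmetry. apply app_assoc. Qed.

Lemma ext_firstn (h t : list nat) (i : nat) :
  ext h t -> i <= length h -> firstn i t = firstn i h.
Proof.
  intros [r ->] Hi. rewrite firstn_app. replace (i - length h) with 0 by lia.
  apply app_nil_r.
Qed.

Lemma ext_nth (h t : list nat) (i d : nat) : ext h t -> i < length h -> nth i t d = nth i h d.
Proof. intros [r ->] Hi. apply app_nth1. exact Hi. Qed.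

Definition incompat (tau : list nat -> nat) (t0 t1 : list nat) : Prop :=
  exists j, j < length t0 /\ j < length t1 /\
    tau (firstn (S j) t0) <> tau (firstn (S j) t1).

Lemma incompat_longer (tau : list nat -> nat) (h t0 t1 : list nat) :
  ext h t0 -> ext h t1 -> incompat tau t0 t1 ->
  length h < length t0 /\ length h < length t1.
Proof.
  intros E0 E1 [j [L0 [L1 Hj]]].
  destruct (le_lt_dec (length h) j) as [H|H]; [lia|].
  exfalso. apply Hj. rewrite (ext_firstn h t0), (ext_firstn h t1); auto.
Qed.

(* A winning strategy of II splits every position h: otherwise II's answer
   at round j after h would be a fixed number m_j, and I wins by playing m_j. *)
Lemma winning_strategy_splits (A : baire -> Prop) (tau : list nat -> nat) :
  domstar_II_winning A tau ->
  forall h, exists p : list nat * list nat,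
    ext h (fst p) /\ ext h (snd p) /\ incompat tau (fst p) (snd p).
Proof.
  intros Htau h. apply NNPP. intros Hnosplit.
  assert (Hsame : forall t0 t1 j, ext h t0 -> ext h t1 ->
            j < length t0 -> j < length t1 ->
            tau (firstn (S j) t0) = tau (firstn (S j) t1)).
  { intros t0 t1 j E0 E1 L0 L1. apply NNPP. intros Hj. apply Hnosplit.
    exists (t0, t1). repeat split; auto. exists j. auto. }
  set (m := fun j => tau (firstn (S j) (h ++ repeat 0 (S j)))).
  set (n := fun k => if k <? length h then nth k h 0 else m k).
  assert (Hh : prefix n (length h) = h).
  { apply prefix_of_list with (d := 0). intros i Hi. unfold n.
    apply Nat.ltb_lt in Hi. rewrite Hi. reflexivity. }
  assert (Hm : forall k, domstar_II_play tau n k = m k).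
  { intros k. unfold domstar_II_play.
    set (L := prefix n (length h + S k)).
    assert (EL : ext h L).
    { unfold L, prefix. rewrite seq_app, map_app. fold (prefix n (length h)).
      rewrite Hh. eexists; reflexivity. }
    rewrite <- (prefix_firstn n (S k) (length h + S k)) by lia. fold L.
    apply Hsame; [exact EL|eexists; reflexivity| |].
    - unfold L. rewrite prefix_length. lia.
    - rewrite length_app, repeat_length. lia. }
  destruct (Htau n) as [_ [N HN]].
  specialize (HN (N + length h) ltac:(lia)). rewrite Hm in HN.
  unfold n in HN. replace (N + length h <? length h) with false in HN
    by (symmetry; apply Nat.ltb_ge; lia).
  lia.
Qed.

(* Following a splitting function along z : 2^N gives a branch of a
   perfect tree; distinct z give plays against which tau answers
   differently. *)
Section PerfectTree.
Variable tau : list nat -> nat.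
Variable splitting : list nat -> list nat * list nat.
Hypothesis splitting_spec : forall h,
  ext h (fst (splitting h)) /\ ext h (snd (splitting h)) /\ incompat tau (fst (splitting h)) (snd (splitting h)).

Definition child (h : list nat) (b : bool) : list nat :=
  if b then snd (splitting h) else fst (splitting h).

Fixpoint node (z : nat -> bool) (k : nat) : list nat :=
  match k with
  | 0 => []
  | S k => child (node z k) (z k)
  end.

Definition branch (z : nat -> bool) : baire := fun k => nth k (node z (S k)) 0.

Lemma child_ext (h : list nat) (b : bool) : ext h (child h b) /\ length h < length (child h b).
Proof.
  destruct (splitting_spec h) as [E0 [E1 I]].
  destruct (incompat_longer tau h _ _ E0 E1 I). unfold child. destruct b; auto.
Qed.

Lemma child_incompat (h : list nat) (b b' : bool) :
  b <> b' -> incompat tau (child h b) (child h b').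
Proof.
  intros Hb. destruct (splitting_spec h) as [_ [_ [j [L0 [L1 Hj]]]]].
  unfold child. destruct b, b'; try contradiction; exists j; auto.
Qed.

Lemma node_length (z : nat -> bool) (k : nat) : k <= length (node z k).
Proof.
  induction k as [|k IH]; simpl; [lia|]. pose proof (proj2 (child_ext (node z k) (z k))). lia.
Qed.

Lemma node_ext (z : nat -> bool) (k k' : nat) : k <= k' -> ext (node z k) (node z k').
Proof.
  intros Hk. induction Hk as [|k' Hk IH]; [apply ext_refl|].
  apply ext_trans with (1 := IH). apply child_ext.
Qed.

Lemma branch_prefix (z : nat -> bool) (k : nat) :
  prefix (branch z) (length (node z k)) = node z k.
Proof.
  apply prefix_of_list with (d := 0). intros i Hi. unfold branch.
  destruct (le_lt_dec (S i) k) as [H|H].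
  - symmetry. apply (ext_nth (node z (S i))); [apply node_ext; exact H|].
    pose proof (node_length z (S i)). lia.
  - apply (ext_nth (node z k)); [apply node_ext; lia|exact Hi].
Qed.

Lemma branch_answer (z : nat -> bool) (k j : nat) :
  j < length (node z k) ->
  domstar_II_play tau (branch z) j = tau (firstn (S j) (node z k)).
Proof.
  intros Hj. unfold domstar_II_play.
  rewrite <- (prefix_firstn (branch z) (S j) (length (node z k))) by lia.
  rewrite branch_prefix. reflexivity.
Qed.

Lemma node_agree (z z' : nat -> bool) (k : nat) :
  (forall j, j < k -> z j = z' j) -> node z k = node z' k.
Proof.
  induction k as [|k IH]; intros Hz; [reflexivity|]. simpl.
  rewrite IH by (intros j Hj; apply Hz; lia). rewrite Hz by lia. reflexivity.
Qed.

Lemma branch_play_inj (z z' : nat -> bool) :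
  domstar_II_play tau (branch z) = domstar_II_play tau (branch z') -> z = z'.
Proof.
  intros Hplay. apply functional_extensionality.
  intros k. induction k as [k IH] using (well_founded_induction lt_wf).
  destruct (Bool.bool_dec (z k) (z' k)) as [Hk|Hk]; [exact Hk|exfalso].
  assert (Hnode : node z k = node z' k) by (apply node_agree; exact IH).
  assert (Ek : node z (S k) = child (node z k) (z k)) by reflexivity.
  assert (Ek' : node z' (S k) = child (node z k) (z' k)) by (simpl; rewrite Hnode; reflexivity).
  destruct (child_incompat (node z k) _ _ Hk) as [j [L [L' Hj]]].
  rewrite <- Ek in L, Hj. rewrite <- Ek' in L', Hj.
  apply Hj. rewrite <- (branch_answer z (S k) j L), <- (branch_answer z' (S k) j L').
  rewrite Hplay. reflexivity.
Qed.
End PerfectTree.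

Lemma gamestar_II_continuum (A : baire -> Prop) :
  P_gamestar_II A -> le_card (fun _ : nat -> bool => True) A.
Proof.
  intros [tau Htau].
  set (splitting := fun h => epsilon (inhabits ([], []))
    (fun p => ext h (fst p) /\ ext h (snd p) /\ incompat tau (fst p) (snd p))).
  assert (Hsplit : forall h, ext h (fst (splitting h)) /\ ext h (snd (splitting h)) /\
                     incompat tau (fst (splitting h)) (snd (splitting h))).
  { intros h. exact (epsilon_spec _ _ (winning_strategy_splits A tau Htau h)). }
  exists (fun z => domstar_II_play tau (branch splitting z)). split.
  - intros z _. apply (Htau (branch splitting z)).
  - intros z z' _ _. apply (branch_play_inj tau splitting Hsplit).
Qed.

Lemma gamestar_II_everything : P_gamestar_II (fun _ => True).
Proof.
  exists (fun s => S (last s 0)). intros n. split; [exact I|].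
  exists 0. intros k _. unfold domstar_II_play. rewrite prefix_S, last_last. lia.
Qed.

Lemma baire_le_cantor : le_card (fun _ : baire => True) (fun _ : nat -> bool => True).
Proof.
  exists (fun x j => Nat.eqb (x (fst (of_nat j))) (snd (of_nat j))).
  split; [auto|]. intros x y _ _ E. apply functional_extensionality. intros k.
  apply (f_equal (fun f => f (to_nat (k, x k)))) in E.
  rewrite cancel_of_to, Nat.eqb_refl in E. simpl in E.
  symmetry in E. apply Nat.eqb_eq in E. symmetry. exact E.
Qed.

Theorem mainTheorem4 :
  same_min P_game_I dominating /\
  same_min P_game_II dominating /\
  same_min P_gamestar_I dominating /\
  min_is_continuum P_gamestar_II.
Proof.
  split; [|split; [|split]].
  - split; intros A HA; exists A; split; try apply le_card_refl.
    + apply game_I_dominating, HA.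
    + apply dominating_game_I, HA.
  - split.
    + intros A HA. exists A. split; [apply game_II_dominating, HA|apply le_card_refl].
    + apply dominating_game_II.
  - split.
    + intros A HA. exists A. split; [apply gamestar_I_dominating, HA|apply le_card_refl].
    + intros B HB. eexists. split; [apply dominating_gamestar_I, HB|].
      apply (le_card_image (fun _ => 0)).
  - split.
    + apply gamestar_II_continuum.
    + exists (fun _ => True). split; [apply gamestar_II_everything|apply baire_le_cantor].
Qed.
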